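(* Let $p$ be an odd prime, $a,m\in\mathbb Z_p$ with $a\not\equiv0,-1\pmod p$ and $m\not\equiv0\pmod p$, and put $A_k=\binom ak\binom{-1-a}k\binom{2k}k$. Then $$\frac{m-4}2\sum_{k=0}^{p-1}\frac{k^2A_k}{m^k}\equiv\sum_{k=0}^{p-1}\frac{kA_k}{m^k}-2a(a+1)\sum_{k=0}^{p-1}\frac{A_k}{m^k}+a(a+1)\sum_{k=0}^{p-2}\frac{A_k}{m^k(k+1)}\pmod{p^3},$$ $$\frac{m-4}2\sum_{k=0}^{p-1}\frac{k^3A_k}{m^k}\equiv3\sum_{k=0}^{p-1}\frac{k^2A_k}{m^k}-(2a(a+1)-1)\sum_{k=0}^{p-1}\frac{kA_k}{m^k}-a(a+1)\sum_{k=0}^{p-1}\frac{A_k}{m^k}\pmod{p^3}.$$ Consequently, if moreover $m\not\equiv 4\pmod p$, then $$\sum_{k=0}^{p-1}\frac{k^3A_k}{m^k}\equiv\frac{(2-4a(a+1))(m-4)+12}{(m-4)^2}\sum_{k=0}^{p-1}\frac{kA_k}{m^k}-\frac{2a(a+1)(m+8)}{(m-4)^2}\sum_{k=0}^{p-1}\frac{A_k}{m^k}+\frac{12a(a+1)}{(m-4)^2}\sum_{k=0}^{p-2}\frac{A_k}{m^k(k+1)}\pmod{p^3}.$$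
   Context: $\mathbb Z_p$ denotes the set of rational numbers whose denominator is not divisible by $p$; for $u,v\in\mathbb Z_p$, $u\equiv v\pmod{p^r}$ means $(u-v)/p^r\in\mathbb Z_p$. For $a$ rational, $\binom a0=1$ and $\binom ak=\frac{a(a-1)\cdots(a-k+1)}{k!}$ for $k\ge1$. *)

From mathcomp Require Import all_boot all_order all_algebra.
Set Implicit Arguments. Unset Strict Implicit. Unset Printing Implicit Defensive.
Import Order.TTheory GRing.Theory Num.Theory.
Local Open Scope ring_scope.

Definition in_Zp (p : nat) (x : rat) : bool := ~~ (p %| `|denq x|)%N.

Definition congr_mod (p r : nat) (u v : rat) : Prop :=
  in_Zp p ((u - v) / (p ^ r)%:R).

Definition binq (a : rat) (k : nat) : rat :=
  (\prod_(i < k) (a - i%:R)) / (k`!)%:R.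

Definition Ak (a : rat) (k : nat) : rat :=
  binq a k * binq (-1 - a) k * ('C(k.*2, k))%:R.

(* The terms obey the recurrence (k+1)^3 A_(k+1) = 2(2k+1)(k^2+k-a(a+1)) A_k.
   By induction on N it yields exact linear identities between the truncated
   sums S_j = sum_(k<=N) k^j A_k/m^k, up to a multiple of the last term
   A_N/m^N. For N = p-1 that term is 0 mod p^3: as a and -1-a are not
   congruent to -1 mod p, the products defining binom(a,p-1) and
   binom(-1-a,p-1) each contain a factor divisible by p, and p divides
   binom(2p-2,p-1). The last congruence is a Z_p-linear combination of the
   first two. *)

From HB Require Import structures.
From mathcomp Require Import all_boot all_order all_algebra.
From mathcomp Require Import ring zify.
Set Implicit Arguments.
Unset Strict Implicit.
Unset Printing Implicit Defensive.

Import Order.TTheory GRing.Theory Num.Theory.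
Local Open Scope ring_scope.

Lemma in_Zp_frac p (n d : int) : ~~ (p %| `|d|)%N -> n%:~R / d%:~R \in in_Zp p.
Proof.
move=> pNd; have d_neq0 : d != 0 by apply: contraNneq pNd => ->.
rewrite unfold_in /in_Zp -(fracqE (n, d)) den_fracq /= d_neq0 /=.
by apply: contra pNd => /dvdn_trans; apply; apply: dvdn_div; apply: dvdn_gcdr.
Qed.

Lemma prime_ndvd_fact p k : prime p -> (k < p)%N -> ~~ (p %| k`!)%N.
Proof.
move=> p_prime; elim: k => [|k IHk] k_lt_p; first by rewrite Euclid_dvd1.
rewrite factS Euclid_dvdM // negb_or IHk ?andbT 1?ltnW //.
by apply: contraTN k_lt_p => /dvdn_leq; rewrite -leqNgt; apply.
Qed.

Lemma prime_dvd_central_bin p : prime p -> (p %| 'C(p.-1.*2, p.-1))%N.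
Proof.
move=> p_prime; have p_gt1 := prime_gt1 p_prime.
have p_coprime : coprime p ((p.-1)`! * (p.-1)`!).
  by rewrite coprimeMr prime_coprime // andbb prime_ndvd_fact // ltn_predL ltnW.
rewrite -(Gauss_dvdl _ p_coprime).
have {4}-> : p.-1 = (p.-1.*2 - p.-1)%N by rewrite -addnn addnK.
by rewrite bin_fact ?leq_double ?dvdn_fact //; lia.
Qed.

Lemma central_binS k : ('C(k.+1.*2, k.+1) * k.+1 = 2 * k.*2.+1 * 'C(k.*2, k))%N.
Proof.
have binSS : (k.*2.+2 * 'C(k.*2.+1, k.+1) = k.+1 * 'C(k.+1.*2, k.+1))%N.
  by rewrite (mul_bin_down k.*2.+2 k.+1) doubleS (_ : k.*2.+2 - k.+1 = k.+1)%N //; lia.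
have binS : (k.*2.+1 * 'C(k.*2, k) = k.+1 * 'C(k.*2.+1, k.+1))%N := mul_bin_diag _ _.
apply/eqP; rewrite -(eqn_pmul2l (ltn0Sn k)); apply/eqP.
nia.
Qed.

Definition Ak_moment (a m : rat) (N j : nat) : rat :=
  \sum_(0 <= k < N) k%:R ^+ j * Ak a k / m ^+ k.

Definition Ak_harmonic (a m : rat) (N : nat) : rat :=
  \sum_(0 <= k < N) Ak a k / (m ^+ k * k.+1%:R).

Lemma binqS b k : binq b k.+1 = binq b k * (b - k%:R) / k.+1%:R.
Proof. by rewrite /binq big_ord_recr factS natrM invfM /=; ring. Qed.

Lemma Ak0 a : Ak a 0 = 1.
Proof. by rewrite /Ak /binq !big_ord0 divr1 !mul1r. Qed.

Lemma AkS a k : Ak a k.+1 =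
  2 * (2 * k%:R + 1) * (k%:R ^+ 2 + k%:R - a * (a + 1)) * Ak a k / k.+1%:R ^+ 3.
Proof.
have k1_neq0 : k.+1%:R != 0 :> rat by rewrite pnatr_eq0.
have central : 'C(k.+1.*2, k.+1)%:R = 2 * (2 * k%:R + 1) * 'C(k.*2, k)%:R / k.+1%:R :> rat.
  have odd_k : k.*2.+1%:R = 2 * k%:R + 1 :> rat by rewrite -natr1 -muln2 natrM mulrC.
  by rewrite -[LHS](mulfK k1_neq0) -(natrM _ _ k.+1) central_binS !natrM odd_k.
rewrite /Ak !binqS central -natr1.
by field; rewrite natr1.
Qed.

Lemma Ak_momentS a m N j :
  Ak_moment a m N.+1 j = Ak_moment a m N j + N%:R ^+ j * Ak a N / m ^+ N.
Proof. by rewrite /Ak_moment big_nat_recr. Qed.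

Lemma Ak_harmonicS a m N :
  Ak_harmonic a m N.+1 = Ak_harmonic a m N + Ak a N / (m ^+ N * N.+1%:R).
Proof. by rewrite /Ak_harmonic big_nat_recr. Qed.

Lemma Ak_moment2_eq (a m : rat) N : m != 0 ->
  (m - 4) * Ak_moment a m N.+1 2 =
    2 * Ak_moment a m N.+1 1 - 4 * a * (a + 1) * Ak_moment a m N.+1 0
    + 2 * a * (a + 1) * Ak_harmonic a m N
    - 2 * (2 * N%:R ^+ 2 + N%:R - 2 * a * (a + 1)) * (Ak a N / m ^+ N).
Proof.
move=> m_neq0; elim: N => [|N IHN].
  by rewrite /Ak_moment /Ak_harmonic !big_nat1 big_geq // Ak0; ring.
rewrite Ak_momentS mulrDr IHN !(Ak_momentS a m N.+1) Ak_harmonicS AkS (exprS m) -natr1.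
by field; rewrite expf_neq0 // m_neq0 addrC natr1 pnatr_eq0.
Qed.

Lemma Ak_moment3_eq (a m : rat) N : m != 0 ->
  (m - 4) * Ak_moment a m N.+1 3 =
    6 * Ak_moment a m N.+1 2 - 2 * (2 * a * (a + 1) - 1) * Ak_moment a m N.+1 1
    - 2 * a * (a + 1) * Ak_moment a m N.+1 0
    - 2 * (2 * N%:R + 1) * (N%:R ^+ 2 + N%:R - a * (a + 1)) * (Ak a N / m ^+ N).
Proof.
move=> m_neq0; elim: N => [|N IHN].
  by rewrite /Ak_moment !big_nat1 Ak0; ring.
rewrite Ak_momentS mulrDr IHN !(Ak_momentS a m N.+1) AkS (exprS m) -natr1.
by field; rewrite expf_neq0 // m_neq0 addrC natr1 pnatr_eq0.
Qed.

Section PIntegers.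

Variable p : nat.
Hypothesis p_prime : prime p.

Let p_neq0 : p%:R != 0 :> rat.
Proof. by rewrite pnatr_eq0 -lt0n prime_gt0. Qed.

Fact in_Zp_subring_closed : subring_closed (in_Zp p).
Proof.
have ndvd_den x y : x \in in_Zp p -> y \in in_Zp p -> ~~ (p %| `|(denq x * denq y)%R|)%N.
  by move=> xZ yZ; rewrite abszM Euclid_dvdM // negb_or; apply/andP.
have den_neq0 x : (denq x)%:~R != 0 :> rat by rewrite intr_eq0 denq_neq0.
split=> [|x y xZ yZ|x y xZ yZ]; first by rewrite unfold_in /= Euclid_dvd1.
- rewrite -(divq_num_den x) -(divq_num_den y).
  have := in_Zp_frac (numq x * denq y - numq y * denq x)%R (ndvd_den _ _ xZ yZ).
  by congr (_ \in in_Zp p); rewrite !rmorphB !rmorphM /=; field; rewrite !den_neq0.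
- rewrite -(divq_num_den x) -(divq_num_den y).
  have := in_Zp_frac (numq x * numq y)%R (ndvd_den _ _ xZ yZ).
  by congr (_ \in in_Zp p); rewrite !rmorphM /=; field; rewrite !den_neq0.
Qed.

HB.instance Definition _ :=
  GRing.isSubringClosed.Build rat (in_Zp p) in_Zp_subring_closed.

Lemma in_Zp_invn n : ~~ (p %| n)%N -> n%:R^-1 \in in_Zp p.
Proof. by move=> pNn; rewrite -div1r pmulrn; apply: (in_Zp_frac 1). Qed.

Lemma in_Zp_divn n : (p %| n)%N -> n%:R / p%:R \in in_Zp p.
Proof. by case/dvdnP=> q ->; rewrite natrM mulfK // rpred_nat. Qed.

Lemma in_Zp_inv x : x \in in_Zp p -> ~ congr_mod p 1 x 0 -> x^-1 \in in_Zp p.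
Proof.
move=> xZ x_ndiv; rewrite -(divq_num_den x) invf_div.
apply: in_Zp_frac; apply: contra_notN x_ndiv => /dvdnP[q num_x].
rewrite /congr_mod subr0 -(divq_num_den x) [numq x]intEsign num_x.
have := in_Zp_frac ((-1) ^+ (numq x < 0)%R * q%:Z) xZ.
congr (_ \in in_Zp p); rewrite PoszM !rmorphM /= !pmulrn.
by field; rewrite p_neq0 intr_eq0 denq_neq0.
Qed.

Lemma congr_mod_trans r u v w :
  congr_mod p r u v -> congr_mod p r v w -> congr_mod p r u w.
Proof.
rewrite /congr_mod => uv vw.
have -> : u - w = (u - v) + (v - w) by ring.
by rewrite mulrDl; apply: rpredD.
Qed.

Lemma congr_mod_mul r u v x y :
  x \in in_Zp p -> y / (p ^ r)%:R \in in_Zp p -> u - v = x * y -> congr_mod p r u v.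
Proof. by move=> xZ yZ uv; rewrite /congr_mod uv -mulrA; apply: rpredM. Qed.

Lemma congr_mod_lincomb r u v u1 v1 u2 v2 x1 x2 :
  x1 \in in_Zp p -> x2 \in in_Zp p -> congr_mod p r u1 v1 -> congr_mod p r u2 v2 ->
  u - v = x1 * (u1 - v1) + x2 * (u2 - v2) -> congr_mod p r u v.
Proof.
rewrite /congr_mod => x1Z x2Z uv1 uv2 ->.
by rewrite mulrDl -!mulrA; apply: rpredD; apply: rpredM.
Qed.

Lemma in_Zp_residue x : x \in in_Zp p -> exists2 r, (r < p)%N & congr_mod p 1 x r%:R.
Proof.
move=> xZ; have p_gt0 : (0 < p%:Z)%R by rewrite ltz_nat prime_gt0.
(* With u d + v p = 1, the residue of x = n / d is that of n u. *)
have /coprimezP[[u v] /= bezout] : coprimez (denq x) p.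
  by rewrite coprimezE coprime_sym prime_coprime.
set n := numq x; set d := denq x; set q := ((n * u) %/ p)%Z.
set r := ((n * u) %% p)%Z; have r_ge0 : (0 <= r)%R by rewrite modz_ge0 ?gt_eqF.
exists `|r|%N; first by rewrite -ltz_nat gez0_abs // ltz_pmod.
have := in_Zp_frac (n * v + q * d)%R xZ; congr (_ \in in_Zp p).
have -> : (`|r|%N%:R : rat) = (n * u - q * p)%:~R.
  by rewrite pmulrn gez0_abs //; congr (_%:~R); rewrite [n * u](divz_eq _ p); ring.
have v_eq : (v%:~R : rat) = (1 - u%:~R * d%:~R) / p%:R.
  have bezoutQ : (u * d + v * p)%:~R = 1 :> rat by rewrite bezout.
  by rewrite -[X in X - _]bezoutQ rmorphD !rmorphM /= addrC addKr -pmulrn mulfK.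
rewrite -[x in RHS](divq_num_den x) rmorphB !rmorphD !rmorphM /= v_eq pmulrn.
by field; rewrite p_neq0 intr_eq0 denq_neq0.
Qed.

Lemma falling_divp b k r : (r < k)%N -> b \in in_Zp p -> congr_mod p 1 b r%:R ->
  (\prod_(i < k) (b - i%:R)) / p%:R \in in_Zp p.
Proof.
move=> r_lt_k bZ br; rewrite (bigD1 (Ordinal r_lt_k)) //= mulrAC.
by rewrite rpredM // rpred_prod // => i _; rewrite rpredB ?rpred_nat.
Qed.

Lemma binq_pred_divp b :
  b \in in_Zp p -> ~ congr_mod p 1 b (-1) -> binq b p.-1 / p%:R \in in_Zp p.
Proof.
move=> bZ bNm1; have p_gt0 := prime_gt0 p_prime.
have [r r_lt_p br] := in_Zp_residue bZ.
have r_lt_pred : (r < p.-1)%N.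
  rewrite ltn_neqAle -ltnS prednK // r_lt_p andbT.
  apply: contra_notN bNm1 => /eqP r_eq; apply: congr_mod_trans br _.
  by rewrite r_eq /congr_mod opprK natr1 prednK // divff //; apply: rpred1.
rewrite /binq mulrAC rpredM ?(falling_divp r_lt_pred) //.
by rewrite in_Zp_invn // prime_ndvd_fact // ltn_predL.
Qed.

Lemma Ak_pred_divp3 a : a \in in_Zp p -> ~ congr_mod p 1 a 0 -> ~ congr_mod p 1 a (-1) ->
  Ak a p.-1 / (p ^ 3)%:R \in in_Zp p.
Proof.
move=> aZ aN0 aNm1.
have a'Z : -1 - a \in in_Zp p by rewrite rpredB ?rpredN1.
have a'Nm1 : ~ congr_mod p 1 (-1 - a) (-1).
  apply: contra_not aN0; rewrite /congr_mod (_ : a - 0 = - (-1 - a - -1)); last by ring.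
  by rewrite mulNr; apply: rpredNr.
rewrite /Ak natrX (_ : _ / _ = binq a p.-1 / p%:R * (binq (-1 - a) p.-1 / p%:R) *
  ('C(p.-1.*2, p.-1)%:R / p%:R)); last by field.
apply: rpredM; first by apply: rpredM; apply: binq_pred_divp.
exact/in_Zp_divn/prime_dvd_central_bin.
Qed.

Section Congruences.

Variables a m : rat.
Hypotheses (aZ : a \in in_Zp p) (mZ : m \in in_Zp p).
Hypotheses (a_ndiv : ~ congr_mod p 1 a 0) (a1_ndiv : ~ congr_mod p 1 a (-1)).
Hypothesis m_ndiv : ~ congr_mod p 1 m 0.

Let m_neq0 : m != 0.
Proof.
apply: contra_notN m_ndiv => /eqP->; rewrite /congr_mod subrr mul0r; exact: rpred0.
Qed.

Lemma Ak_boundary_congr u v x :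
  x \in in_Zp p -> u - v = x * (Ak a p.-1 / m ^+ p.-1) -> congr_mod p 3 u v.
Proof.
move=> xZ uv.
apply: (congr_mod_mul (x := x / m ^+ p.-1) _ (Ak_pred_divp3 aZ a_ndiv a1_ndiv)).
  by rewrite -exprVn rpredM // rpredX // in_Zp_inv.
by rewrite uv mulrCA mulrC.
Qed.

Lemma Ak_moment2_congr :
  congr_mod p 3 ((m - 4) / 2 * Ak_moment a m p 2)
    (Ak_moment a m p 1 - 2 * a * (a + 1) * Ak_moment a m p 0
     + a * (a + 1) * Ak_harmonic a m p.-1).
Proof.
apply: (Ak_boundary_congr (x := - (2 * p.-1%:R ^+ 2 + p.-1%:R - 2 * a * (a + 1)))).
  by rewrite ?(rpredN, rpredB, rpredD, rpredM, rpredX, rpred_nat, rpred1).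
have := Ak_moment2_eq a p.-1 m_neq0; rewrite prednK ?prime_gt0 // => eq2.
by rewrite mulrAC eq2; field; rewrite expf_neq0.
Qed.

Lemma Ak_moment3_congr :
  congr_mod p 3 ((m - 4) / 2 * Ak_moment a m p 3)
    (3 * Ak_moment a m p 2 - (2 * a * (a + 1) - 1) * Ak_moment a m p 1
     - a * (a + 1) * Ak_moment a m p 0).
Proof.
apply: (Ak_boundary_congr
  (x := - ((2 * p.-1%:R + 1) * (p.-1%:R ^+ 2 + p.-1%:R - a * (a + 1))))).
  by rewrite ?(rpredN, rpredB, rpredD, rpredM, rpredX, rpred_nat, rpred1).
have := Ak_moment3_eq a p.-1 m_neq0; rewrite prednK ?prime_gt0 // => eq3.
by rewrite mulrAC eq3; field; rewrite expf_neq0.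
Qed.

Lemma Ak_moment3_congr_reduced : ~ congr_mod p 1 m 4 ->
  congr_mod p 3 (Ak_moment a m p 3)
    (((2 - 4 * a * (a + 1)) * (m - 4) + 12) / (m - 4) ^+ 2 * Ak_moment a m p 1
     - 2 * a * (a + 1) * (m + 8) / (m - 4) ^+ 2 * Ak_moment a m p 0
     + 12 * a * (a + 1) / (m - 4) ^+ 2 * Ak_harmonic a m p.-1).
Proof.
move=> m_ndiv4.
have m4_neq0 : m - 4 != 0.
  apply: contra_notN m_ndiv4 => /eqP m4; rewrite /congr_mod m4 mul0r; exact: rpred0.
have m4V : (m - 4)^-1 \in in_Zp p.
  by apply: in_Zp_inv; rewrite /congr_mod ?subr0 // rpredB ?rpred_nat.
apply: (congr_mod_lincomb _ _ Ak_moment3_congr Ak_moment2_congr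
  (x1 := 2 * (m - 4)^-1) (x2 := 12 * (m - 4)^-1 ^+ 2)).
- by rewrite rpredM ?rpred_nat.
- by rewrite rpredM ?rpredX ?rpred_nat.
- (* Abstracting the sums keeps [field] from unfolding them. *)
  move: (Ak_moment a m p 3) (Ak_moment a m p 2) (Ak_moment a m p 1)
        (Ak_moment a m p 0) (Ak_harmonic a m p.-1) => S3 S2 S1 S0 T.
  by field.
Qed.

End Congruences.

End PIntegers.

Theorem theorem3p1 (p : nat) (a m : rat) :
  prime p -> odd p ->
  in_Zp p a -> in_Zp p m ->
  ~ congr_mod p 1 a 0 -> ~ congr_mod p 1 a (-1) -> ~ congr_mod p 1 m 0 ->
  let S (j : nat) := \sum_(0 <= k < p) (k%:R ^+ j * Ak a k / m ^+ k) in
  let T := \sum_(0 <= k < p.-1) (Ak a k / (m ^+ k * (k.+1)%:R)) in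
  [/\ congr_mod p 3 ((m - 4) / 2 * S 2%N)
        (S 1%N - 2 * a * (a + 1) * S 0%N + a * (a + 1) * T),
      congr_mod p 3 ((m - 4) / 2 * S 3%N)
        (3 * S 2%N - (2 * a * (a + 1) - 1) * S 1%N - a * (a + 1) * S 0%N)
    & ~ congr_mod p 1 m 4 ->
      congr_mod p 3 (S 3%N)
        (((2 - 4 * a * (a + 1)) * (m - 4) + 12) / (m - 4) ^+ 2 * S 1%N
         - 2 * a * (a + 1) * (m + 8) / (m - 4) ^+ 2 * S 0%N
         + 12 * a * (a + 1) / (m - 4) ^+ 2 * T)].
Proof.
move=> p_prime _ aZ mZ a_ndiv a1_ndiv m_ndiv S T.
split; [exact: (Ak_moment2_congr p_prime aZ mZ a_ndiv a1_ndiv m_ndiv)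
       | exact: (Ak_moment3_congr p_prime aZ mZ a_ndiv a1_ndiv m_ndiv)
       | exact: (Ak_moment3_congr_reduced p_prime aZ mZ a_ndiv a1_ndiv m_ndiv)].
Qed.
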